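(* Let $\mathcal{R}$ be a left-linear TRS. If there is a confluent TRS $\mathcal{C}\subseteq\mathcal{R}$ such that $t\leftrightarrow^*_\mathcal{C} u$ for every parallel critical pair $(t,u)$ between $\mathcal{R}$ and $\mathcal{R}$, then $\mathcal{R}$ is confluent.
   Context: A TRS is a set of rules $\ell\to r$ with $\ell\notin\mathcal{V}$, $\mathcal{V}ar(r)\subseteq\mathcal{V}ar(\ell)$; left-linear: no variable occurs twice in a left-hand side; confluent: ${}_\mathcal{R}\!\!\leftarrow^*\cdot\to_\mathcal{R}^*\subseteq\to_\mathcal{R}^*\cdot{}_\mathcal{R}\!\!\leftarrow^*$; $\leftrightarrow^*_\mathcal{C}$ is the reflexive-transitive-symmetric closure of $\to_\mathcal{C}$. Positions $p,q$ are parallel if neither is a prefix of the other; $\mathcal{P}os_\mathcal{F}(\ell)$ denotes the function-symbol positions of $\ell$; $\epsilon$ is the root. Parallel critical pair between $\mathcal{R}$ and $\mathcal{S}$: let $\ell\to r$ be a variant (renaming) of an $\mathcal{S}$-rule, $P\subseteq\mathcal{P}os_\mathcal{F}(\ell)$ a non-empty set of pairwise parallel positions, $\ell_p\to r_p$ ($p\in P$) variants of $\mathcal{R}$-rules, all these rules pairwise variable-disjoint, $\sigma$ a most general unifier of $\{\ell_p\approx\ell|_p\}_{p\in P}$, and if $P=\{\epsilon\}$ then $\ell_\epsilon\to r_\epsilon$ is not a variant of $\ell\to r$. Then $((\ell\sigma)[r_p\sigma]_{p\in P}, r\sigma)$ is a parallel critical pair. *)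

From Stdlib Require Import List Relations.
Import ListNotations.
Set Implicit Arguments.

Section Terms.
Variables F V : Type.

(* First-order terms (unranked: a symbol applied to any list of arguments). *)
Inductive term : Type :=
| Var : V -> term
| Fun : F -> list term -> term.

Fixpoint vars (t : term) : list V :=
  match t with
  | Var x => [x]
  | Fun _ ts =>
      (fix go (l : list term) : list V :=
         match l with nil => nil | u :: l' => vars u ++ go l' end) ts
  end.

Definition subst := V -> term.

Fixpoint apply_subst (s : subst) (t : term) : term :=
  match t with
  | Var x => s x
  | Fun f ts => Fun f (map (apply_subst s) ts)
  end.

(* Positions: sequences of (0-based) argument indices; [] is the root. *)
Definition pos := list nat.

Fixpoint subterm_at (t : term) (p : pos) : option term :=
  match p with
  | nil => Some t
  | i :: p' =>
      match t with
      | Var _ => None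
      | Fun _ ts =>
          match nth_error ts i with
          | Some ti => subterm_at ti p' | None => None
          end
      end
  end.

(* t[s]_p (t unchanged if p is not a position of t). *)
Fixpoint replace_at (t : term) (p : pos) (s : term) : term :=
  match p with
  | nil => s
  | i :: p' =>
      match t with
      | Var x => Var x
      | Fun f ts =>
          Fun f ((fix upd (l : list term) (k : nat) : list term :=
                    match l, k with
                    | nil, _ => nil
                    | u :: l', 0 => replace_at u p' s :: l'
                    | u :: l', S k' => u :: upd l' k'
                    end) ts i)
      end
  end.

Definition prefix (p q : pos) : Prop := exists r, q = p ++ r.
Definition parallel (p q : pos) : Prop := ~ prefix p q /\ ~ prefix q p.

Definition fun_pos (t : term) (p : pos) : Prop :=
  exists f ts, subterm_at t p = Some (Fun f ts).

Definition rule := (term * term)%type.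
Definition trs := rule -> Prop.

Definition rule_vars (rl : rule) : list V := vars (fst rl) ++ vars (snd rl).

Definition is_trs (R : trs) : Prop :=
  forall l r, R (l, r) ->
    (exists f ts, l = Fun f ts) /\ (forall x, In x (vars r) -> In x (vars l)).

Definition left_linear (R : trs) : Prop :=
  forall l r, R (l, r) -> NoDup (vars l).

Definition sub_trs (C R : trs) : Prop := forall rl, C rl -> R rl.

Definition rstep (R : trs) (s t : term) : Prop :=
  exists l r (sg : subst) p,
    R (l, r) /\ subterm_at s p = Some (apply_subst sg l) /\
    t = replace_at s p (apply_subst sg r).

Definition rsteps (R : trs) : relation term := clos_refl_trans term (rstep R).
Definition conv (R : trs) : relation term := clos_refl_sym_trans term (rstep R).

Definition confluent (R : trs) : Prop :=
  forall s t u, rsteps R s t -> rsteps R s u ->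
    exists v, rsteps R t v /\ rsteps R u v.

Definition renaming (pi : V -> V) : Prop :=
  exists pinv : V -> V, (forall x, pinv (pi x) = x) /\ (forall x, pi (pinv x) = x).

Definition variant (rl rl' : rule) : Prop :=
  exists pi, renaming pi /\
    fst rl' = apply_subst (fun x => Var (pi x)) (fst rl) /\
    snd rl' = apply_subst (fun x => Var (pi x)) (snd rl).

Definition variant_of (R : trs) (rl : rule) : Prop :=
  exists rl0, R rl0 /\ variant rl0 rl.

Definition var_disjoint (a b : rule) : Prop :=
  forall x, In x (rule_vars a) -> ~ In x (rule_vars b).

Definition unifies (l : term) (ps : list (pos * rule)) (tau : subst) : Prop :=
  forall p rl, In (p, rl) ps ->
    exists lsub, subterm_at l p = Some lsub /\
                 apply_subst tau (fst rl) = apply_subst tau lsub.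

Definition is_mgu (l : term) (ps : list (pos * rule)) (sg : subst) : Prop :=
  unifies l ps sg /\
  forall tau, unifies l ps tau ->
    exists delta : subst, forall x, tau x = apply_subst delta (sg x).

Definition multi_replace (sg : subst) (t : term) (ps : list (pos * rule)) : term :=
  fold_left (fun acc pr => replace_at acc (fst pr) (apply_subst sg (snd (snd pr)))) ps t.

Definition pcp (R S : trs) (t u : term) : Prop :=
  exists (l r : term) (ps : list (pos * rule)) (sg : subst),
    variant_of S (l, r) /\
    ps <> nil /\
    NoDup (map fst ps) /\
    (forall p, In p (map fst ps) -> fun_pos l p) /\
    (forall p q, In p (map fst ps) -> In q (map fst ps) -> p <> q -> parallel p q) /\
    (forall p rl, In (p, rl) ps -> variant_of R rl) /\
    (forall p rl, In (p, rl) ps -> var_disjoint rl (l, r)) /\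
    (forall p q rlp rlq, In (p, rlp) ps -> In (q, rlq) ps -> p <> q ->
        var_disjoint rlp rlq) /\
    is_mgu l ps sg /\
    (forall rl, ps = [(nil, rl)] -> ~ variant rl (l, r)) /\
    t = multi_replace sg (apply_subst sg l) ps /\
    u = apply_subst sg r.

End Terms.

Arguments Var {F V} _.
Arguments Fun {F V} _ _.

From Stdlib Require Import List Relations Arith Lia Classical ClassicalEpsilon.
Import ListNotations.
Set Implicit Arguments.

(* Write [⇉_B] for parallel rewriting with rules of B and let
   [s γ t] mean [s ⇉_R · →*_C t].  The proof shows that γ has the diamond
   property; since [→_R ⊆ γ ⊆ →*_R], this makes [→*_R] confluent.

   The heart is the overlap lemma: for a rule [l → r] of R and a parallel
   step [lσ ⇉_R u], the results [rσ] and [u] become C-convertible after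
   one more parallel step on each side.  Because [l] is linear, the step
   [lσ ⇉ u] decomposes into a parallel step on the substitution plus a set
   of pairwise parallel redexes at function positions of [l]
   (decomposition lemma).  Renaming the redex rules apart and computing a
   most general unifier (existence of mgus) exhibits the peak as an
   instance of a parallel critical pair, which is C-convertible by
   hypothesis; the only other case, a root overlap with a variant of
   [l → r] itself, is trivial.  Confluence of C then turns "parallel peaks
   close up to C-conversion" into the diamond property of γ. *)

Section Terms.
Context {F V : Type}.
Local Notation term := (term F V).
Local Notation subst := (subst F V).

Definition var_eq_dec (x y : V) : {x = y} + {x <> y} := excluded_middle_informative _.

Definition term_nested_ind (P : term -> Prop) (Hv : forall x, P (Var x))
  (Hf : forall f ts, Forall P ts -> P (Fun f ts)) : forall t, P t :=
  fix rec t := match t with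
  | Var x => Hv x
  | Fun f ts => Hf f ts ((fix go l : Forall P l := match l with
        | [] => Forall_nil _ | u :: l' => Forall_cons _ (rec u) (go l') end) ts)
  end.

Lemma vars_Fun f ts : vars (Fun f ts) = flat_map (@vars F V) ts.
Proof. induction ts; simpl; auto. Qed.

Lemma apply_Fun (s : subst) f ts : apply_subst s (Fun f ts) = Fun f (map (apply_subst s) ts).
Proof. reflexivity. Qed.

Lemma subst_ext (s1 s2 : subst) t :
  (forall x, In x (vars t) -> s1 x = s2 x) -> apply_subst s1 t = apply_subst s2 t.
Proof.
  induction t using term_nested_ind; intros Hs; simpl.
  - apply Hs; simpl; auto.
  - f_equal. rewrite vars_Fun in Hs. induction H; simpl; auto.
    simpl in Hs. f_equal.
    + apply H. intros; apply Hs; apply in_or_app; auto.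
    + apply IHForall. intros; apply Hs. apply in_or_app; auto.
Qed.

Lemma subst_ext_inv (s1 s2 : subst) t :
  apply_subst s1 t = apply_subst s2 t -> forall x, In x (vars t) -> s1 x = s2 x.
Proof.
  induction t using term_nested_ind; intros Hs y Hy.
  - simpl in *. destruct Hy as [<-|[]]; auto.
  - rewrite vars_Fun in Hy. simpl in Hs. injection Hs as Hs.
    induction H; simpl in *. destruct Hy.
    injection Hs as H1 H2. apply in_app_or in Hy as [Hy|Hy]; eauto.
Qed.

Lemma subst_comp (s d : subst) t :
  apply_subst d (apply_subst s t) = apply_subst (fun x => apply_subst d (s x)) t.
Proof.
  induction t using term_nested_ind; simpl; auto.
  f_equal. rewrite map_map. induction H; simpl; f_equal; auto.
Qed.

Lemma subst_id t : apply_subst (@Var F V) t = t.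
Proof.
  induction t using term_nested_ind; simpl; auto.
  f_equal. induction H; simpl; f_equal; auto.
Qed.

Lemma vars_subst (s : subst) t x :
  In x (vars (apply_subst s t)) <-> exists y, In y (vars t) /\ In x (vars (s y)).
Proof.
  induction t using term_nested_ind.
  - simpl. split; [intros; exists x0; simpl; auto | intros [y [[<-|[]] Hy]]; auto].
  - rewrite apply_Fun, !vars_Fun. induction H; simpl.
    + split; [intros []| intros [y [[] _]]].
    + rewrite !in_app_iff, IHForall, H. split.
      * intros [[y [H1 H2]]|[y [H1 H2]]]; exists y; rewrite in_app_iff; auto.
      * intros [y [H1 H2]]; rewrite in_app_iff in H1; destruct H1; eauto.
Qed.

Lemma vars_rename (pi : V -> V) (t : term) :
  vars (apply_subst (fun x => Var (pi x)) t) = map pi (vars t).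
Proof.
  induction t using term_nested_ind; auto.
  rewrite apply_Fun, !vars_Fun. induction H; simpl; auto.
  rewrite map_app, H, IHForall; reflexivity.
Qed.

End Terms.

Section Positions.
Context {F V : Type}.
Local Notation term := (term F V).
Local Notation subst := (subst F V).

Fixpoint update_nth (g : term -> term) (l : list term) (k : nat) : list term :=
  match l, k with
  | [], _ => []
  | u :: l', 0 => g u :: l'
  | u :: l', S k' => u :: update_nth g l' k'
  end.

Lemma replace_Fun f ts i p (s : term) :
  replace_at (Fun f ts) (i :: p) s = Fun f (update_nth (fun u => replace_at u p s) ts i).
Proof. simpl. f_equal. revert i; induction ts; intros [|i]; simpl; auto. f_equal; auto. Qed.

Lemma replace_nil t (s : term) : replace_at t [] s = s.
Proof. destruct t; reflexivity. Qed.

Lemma nth_error_update g l k j :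
  nth_error (update_nth g l k) j =
  if Nat.eq_dec k j then option_map g (nth_error l k) else nth_error l j.
Proof.
  revert k j; induction l; intros [|k] [|j]; simpl; try rewrite IHl;
  repeat destruct Nat.eq_dec; simpl; auto; try lia.
Qed.

Lemma update_update g1 g2 l k :
  update_nth g2 (update_nth g1 l k) k = update_nth (fun u => g2 (g1 u)) l k.
Proof. revert k; induction l; intros [|k]; simpl; f_equal; auto. Qed.

Lemma update_app g pre a post :
  update_nth g (pre ++ a :: post) (length pre) = pre ++ g a :: post.
Proof. induction pre; simpl; f_equal; auto. Qed.

Lemma map_update (h : term -> term) g g' l k :
  (forall u, nth_error l k = Some u -> h (g u) = g' (h u)) ->
  map h (update_nth g l k) = update_nth g' (map h l) k.
Proof.
  revert k; induction l; intros [|k] H; simpl in *; auto; f_equal; auto.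
Qed.

Lemma subterm_subst (s : subst) t p u :
  subterm_at t p = Some u -> subterm_at (apply_subst s t) p = Some (apply_subst s u).
Proof.
  revert t; induction p as [|i p IH]; intros t H; simpl in *.
  - congruence.
  - destruct t as [x|f ts]; [discriminate|].
    simpl. rewrite nth_error_map.
    destruct (nth_error ts i); simpl; [apply IH; auto|discriminate].
Qed.

Lemma replace_subst (s : subst) t p u :
  subterm_at t p <> None ->
  apply_subst s (replace_at t p u) = replace_at (apply_subst s t) p (apply_subst s u).
Proof.
  revert t; induction p as [|i p IH]; intros t H; [rewrite !replace_nil; reflexivity|].
  destruct t as [x|f ts]; [simpl in H; congruence|].
  rewrite replace_Fun, apply_Fun, apply_Fun, replace_Fun. f_equal.
  apply map_update. intros v Hv. apply IH. simpl in H. rewrite Hv in H. auto.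
Qed.

Lemma subterm_vars (t : term) p u : subterm_at t p = Some u -> incl (vars u) (vars t).
Proof.
  revert t; induction p as [|i p IH]; intros t H; simpl in *.
  - injection H as <-. apply incl_refl.
  - destruct t as [x|f ts]; [discriminate|].
    destruct (nth_error ts i) eqn:E; [|discriminate].
    intros y Hy. rewrite vars_Fun. apply in_flat_map. exists t.
    split; [eapply nth_error_In; eauto | eapply IH; eauto].
Qed.

Lemma parallel_nil_l q : ~ parallel [] q.
Proof. intros [H _]. apply H. exists q. reflexivity. Qed.

Lemma parallel_nil_r q : ~ parallel q [].
Proof. intros [_ H]. apply H. exists q. reflexivity. Qed.

Lemma prefix_cons (a b : nat) p q : prefix (a :: p) (b :: q) <-> a = b /\ prefix p q.
Proof.
  unfold prefix; split.
  - intros [r Hr]. simpl in Hr. injection Hr as -> ->. eauto.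
  - intros [-> [r ->]]. exists r. reflexivity.
Qed.

Lemma parallel_cons i j p q : parallel (i :: p) (j :: q) <-> i <> j \/ parallel p q.
Proof.
  unfold parallel. rewrite !prefix_cons.
  destruct (Nat.eq_dec i j) as [<-|Hne]; [|assert (j <> i) by congruence; tauto].
  assert (i = i) by reflexivity. tauto.
Qed.

Lemma subterm_replace_parallel t p q (s : term) :
  parallel p q -> subterm_at (replace_at t p s) q = subterm_at t q.
Proof.
  revert t q; induction p as [|i p IH]; intros t q Hpq.
  - exfalso; eapply parallel_nil_l; eauto.
  - destruct q as [|j q]; [exfalso; eapply parallel_nil_r; eauto|].
    destruct t as [x|f ts]; [reflexivity|].
    rewrite replace_Fun. simpl. rewrite nth_error_update.
    destruct (Nat.eq_dec i j) as [<-|Hne]; auto.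
    destruct (nth_error ts i); simpl; auto.
    apply IH. apply parallel_cons in Hpq as [Hij|Hpq]; tauto.
Qed.

Definition replace_all {A : Type} (val : A -> term) (ps : list (pos * A)) (t : term) : term :=
  fold_left (fun acc e => replace_at acc (fst e) (val (snd e))) ps t.

Lemma multi_replace_replace_all (sg : subst) t (ps : list (pos * rule F V)) :
  multi_replace sg t ps = replace_all (fun rl => apply_subst sg (snd rl)) ps t.
Proof. reflexivity. Qed.

Lemma replace_all_app {A} (v : A -> term) a b t :
  replace_all v (a ++ b) t = replace_all v b (replace_all v a t).
Proof. unfold replace_all. apply fold_left_app. Qed.

Definition pairwise_parallel (l : list pos) :=
  forall p q, In p l -> In q l -> p <> q -> parallel p q.

Lemma replace_all_subst {A} (val : A -> term) (d : subst) ps t :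
  (forall p a, In (p, a) ps -> subterm_at t p <> None) ->
  NoDup (map fst ps) -> pairwise_parallel (map fst ps) ->
  apply_subst d (replace_all val ps t) =
  replace_all (fun a => apply_subst d (val a)) ps (apply_subst d t).
Proof.
  unfold replace_all. revert t; induction ps as [|[p a] ps IH]; intros t Hv Hnd Hpw; simpl; auto.
  simpl in Hnd. inversion Hnd as [|? ? Hp Hnd']; subst.
  assert (Hin : forall q b, In (q, b) ps -> In q (map fst ps))
    by (intros q b Hq; apply in_map_iff; exists (q, b); auto).
  rewrite IH.
  - f_equal. apply replace_subst. eapply Hv; simpl; eauto.
  - intros q b Hq. rewrite subterm_replace_parallel.
    + eapply Hv; simpl; eauto.
    + apply Hpw; simpl; eauto. intros ->. eauto.
  - auto.
  - intros p' q' Hp' Hq'; apply Hpw; simpl; auto.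
Qed.

Lemma replace_all_ext {A} (va vb : A -> term) ps t :
  (forall a, va a = vb a) -> replace_all va ps t = replace_all vb ps t.
Proof.
  intros H. unfold replace_all. revert t; induction ps as [|e ps IH]; intros t; simpl; auto.
  rewrite H. apply IH.
Qed.

Lemma replace_all_Forall2 {A B} (va : A -> term) (vb : B -> term) l1 l2 t :
  Forall2 (fun e1 e2 => fst e1 = fst e2 /\ va (snd e1) = vb (snd e2)) l1 l2 ->
  replace_all va l1 t = replace_all vb l2 t.
Proof.
  unfold replace_all. intros H; revert t; induction H as [|[p a] [q b] l1 l2 [H1 H2] H IH];
  intros t; simpl in *; auto. subst. rewrite H2. apply IH.
Qed.

Lemma replace_all_below {A} (val : A -> term) i (ps : list (pos * A)) f ts :
  replace_all val (map (fun e => (i :: fst e, snd e)) ps) (Fun f ts) =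
  Fun f (update_nth (replace_all val ps) ts i).
Proof.
  unfold replace_all. revert ts; induction ps as [|[p a] ps IH]; intros ts;
  cbn [map fold_left fst snd].
  - f_equal. revert i; induction ts; intros [|i]; simpl; f_equal; auto.
  - rewrite replace_Fun, IH, update_update. reflexivity.
Qed.

(* The position of the same subterm after adding an argument in front. *)
Definition shift_pos (p : pos) : pos := match p with [] => [] | i :: q => S i :: q end.

Lemma replace_all_shift {A} (val : A -> term) (ps : list (pos * A)) f a ts us :
  (forall e, In e ps -> fst e <> []) ->
  replace_all val ps (Fun f ts) = Fun f us ->
  replace_all val (map (fun e => (shift_pos (fst e), snd e)) ps) (Fun f (a :: ts)) =
  Fun f (a :: us).
Proof.
  unfold replace_all. revert ts; induction ps as [|[p b] ps IH]; intros ts Hne H;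
  cbn [map fold_left fst snd] in *.
  - congruence.
  - destruct p as [|i q]. { exfalso; eapply (Hne (nil, b)); simpl; auto. }
    cbn [shift_pos]. rewrite replace_Fun in *.
    apply IH; auto. intros e He; apply Hne; simpl; auto.
Qed.

Lemma NoDup_map_inj {A B} (f : A -> B) l :
  (forall x y, In x l -> In y l -> f x = f y -> x = y) -> NoDup l -> NoDup (map f l).
Proof.
  induction l; simpl; intros Hi Hn; constructor; inversion Hn; subst.
  - intros Hin. apply in_map_iff in Hin as [y [Hy1 Hy2]].
    assert (y = a) by (apply Hi; auto). subst; auto.
  - apply IHl; auto.
Qed.

Lemma positions_cons_shift (P0 P1 : list pos) :
  NoDup P0 -> pairwise_parallel P0 -> NoDup P1 -> pairwise_parallel P1 -> ~ In [] P1 ->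
  NoDup (map (cons 0) P0 ++ map shift_pos P1) /\
  pairwise_parallel (map (cons 0) P0 ++ map shift_pos P1).
Proof.
  intros Hnd0 Hpw0 Hnd1 Hpw1 Hroot.
  assert (Hshift : forall p, In p P1 -> exists i q, p = i :: q /\ shift_pos p = S i :: q).
  { intros [|i q] Hp; [contradiction|eauto]. }
  split.
  - apply NoDup_app.
    + apply NoDup_map_inj; auto. congruence.
    + apply NoDup_map_inj; auto. intros x y Hx Hy.
      destruct (Hshift x Hx) as (i & q & -> & ->), (Hshift y Hy) as (j & q' & -> & ->).
      congruence.
    + intros a Ha Hb. apply in_map_iff in Ha as [p [<- _]]. apply in_map_iff in Hb as [p' [Hb Hp']].
      destruct (Hshift p' Hp') as (i & q & -> & E). congruence.
  - intros p q Hp Hq Hpq. apply in_app_or in Hp as [Hp|Hp]; apply in_app_or in Hq as [Hq|Hq];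
      apply in_map_iff in Hp as [p0 [<- Hp0]]; apply in_map_iff in Hq as [q0 [<- Hq0]].
    + apply parallel_cons. right. apply Hpw0; auto. congruence.
    + destruct (Hshift q0 Hq0) as (i & q & -> & ->). apply parallel_cons. lia.
    + destruct (Hshift p0 Hp0) as (i & q & -> & ->). apply parallel_cons. lia.
    + destruct (Hshift p0 Hp0) as (i & p & -> & ->), (Hshift q0 Hq0) as (j & q & -> & ->).
      assert (H : parallel (i :: p) (j :: q)) by (apply Hpw1; auto; congruence).
      rewrite parallel_cons in *. destruct H; [left; lia|right; auto].
Qed.

End Positions.

Section ParallelRewriting.
Context {F V : Type}.
Local Notation term := (term F V).
Local Notation subst := (subst F V).

Inductive par (B : trs F V) : term -> term -> Prop :=
| par_var x : par B (Var x) (Var x)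
| par_fun f ts us : par_list B ts us -> par B (Fun f ts) (Fun f us)
| par_root l r (sg : subst) : B (l, r) -> par B (apply_subst sg l) (apply_subst sg r)
with par_list (B : trs F V) : list term -> list term -> Prop :=
| par_nil : par_list B [] []
| par_cons t u ts us : par B t u -> par_list B ts us -> par_list B (t :: ts) (u :: us).

Scheme par_mut := Induction for par Sort Prop
  with par_list_mut := Induction for par_list Sort Prop.

Lemma par_refl B (t : term) : par B t t.
Proof.
  induction t using term_nested_ind; constructor.
  induction H; constructor; auto.
Qed.

Lemma par_list_refl B (ts : list term) : par_list B ts ts.
Proof. induction ts; constructor; auto using par_refl. Qed.

Lemma par_subst B (s s' : subst) t :
  (forall x, par B (s x) (s' x)) -> par B (apply_subst s t) (apply_subst s' t).
Proof.
  intros Hs. induction t using term_nested_ind; simpl; auto.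
  constructor. induction H; simpl; constructor; auto.
Qed.

Lemma par_list_update B g ts i :
  (forall u, nth_error ts i = Some u -> par B u (g u)) -> par_list B ts (update_nth g ts i).
Proof.
  revert i; induction ts; intros [|i] H; simpl in *; constructor;
    auto using par_refl, par_list_refl.
Qed.

Lemma par_Fun_inv B f ts (u : term) :
  par B (Fun f ts) u ->
  (exists us, u = Fun f us /\ par_list B ts us) \/
  (exists l r (th : subst), B (l, r) /\ Fun f ts = apply_subst th l /\ u = apply_subst th r).
Proof.
  intros H. remember (Fun f ts) as s0. destruct H.
  - discriminate.
  - injection Heqs0 as -> ->. left; eauto.
  - right. eauto 6.
Qed.

Lemma rstep_par B (s t : term) : rstep B s t -> par B s t.
Proof.
  intros (l & r & sg & p & HB & Hs & Ht). subst t.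
  revert s Hs; induction p as [|i p IH]; intros s Hs.
  - simpl in Hs. injection Hs as ->. rewrite replace_nil. constructor; auto.
  - destruct s as [x|f ts]; [discriminate|].
    rewrite replace_Fun. constructor. apply par_list_update.
    intros u Hu. simpl in Hs. rewrite Hu in Hs. auto.
Qed.

Definition ctx_closed (P : relation term) : Prop :=
  forall f pre a b post, P a b -> P (Fun f (pre ++ a :: post)) (Fun f (pre ++ b :: post)).

Lemma rstep_ctx_closed (B : trs F V) : ctx_closed (rstep B).
Proof.
  intros f pre a b post (l & r & sg & p & HB & Hs & Ht). exists l, r, sg, (length pre :: p).
  split; auto. split.
  - simpl. rewrite nth_error_app2, Nat.sub_diag by lia. simpl. auto.
  - rewrite replace_Fun, update_app. congruence.
Qed.

Lemma ctx_closed_rt P : ctx_closed P -> ctx_closed (clos_refl_trans _ P).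
Proof.
  intros HP f pre a b post. induction 1; [apply rt_step; auto|apply rt_refl|eapply rt_trans; eauto].
Qed.

Lemma ctx_closed_rst P : ctx_closed P -> ctx_closed (clos_refl_sym_trans _ P).
Proof.
  intros HP f pre a b post. induction 1;
    [apply rst_step; auto|apply rst_refl|apply rst_sym; auto|eapply rst_trans; eauto].
Qed.

Lemma ctx_closed_args (P : relation term) :
  reflexive _ P -> transitive _ P -> ctx_closed P ->
  forall f ts us, Forall2 P ts us -> P (Fun f ts) (Fun f us).
Proof.
  intros Hrefl Htrans HP f ts us H.
  change ts with ([] ++ ts). change us with ([] ++ us). generalize (@nil term).
  induction H as [|a b ts us Hab H IH]; intros pre; [apply Hrefl|].
  eapply Htrans; [apply HP; eauto|].
  specialize (IH (pre ++ [b])). rewrite <- !app_assoc in IH. exact IH.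
Qed.

Lemma conv_args (B : trs F V) f ts us :
  Forall2 (conv B) ts us -> conv B (Fun f ts) (Fun f us).
Proof.
  apply ctx_closed_args; [intros ?; apply rst_refl|intros ? ? ?; apply rst_trans|].
  apply ctx_closed_rst, rstep_ctx_closed.
Qed.

Lemma par_rsteps B (s t : term) : par B s t -> rsteps B s t.
Proof.
  revert s t.
  apply (@par_mut B (fun s t _ => rsteps B s t) (fun ts us _ => Forall2 (rsteps B) ts us));
    intros; auto.
  - apply rt_refl.
  - apply ctx_closed_args; auto.
    + intros ?; apply rt_refl.
    + intros ? ? ?; apply rt_trans.
    + apply ctx_closed_rt, rstep_ctx_closed.
  - apply rt_step. exists l, r, sg, []. rewrite replace_nil. auto.
Qed.

Lemma rstep_subst B (d : subst) (a b : term) :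
  rstep B a b -> rstep B (apply_subst d a) (apply_subst d b).
Proof.
  intros (l & r & sg & p & HB & Hs & Ht). subst b.
  exists l, r, (fun x => apply_subst d (sg x)), p. split; auto. split.
  - rewrite <- subst_comp. apply subterm_subst; auto.
  - rewrite replace_subst by congruence. rewrite subst_comp. auto.
Qed.

Lemma conv_subst B (d : subst) (a b : term) :
  conv B a b -> conv B (apply_subst d a) (apply_subst d b).
Proof.
  induction 1; [apply rst_step, rstep_subst; auto|apply rst_refl|apply rst_sym; auto|
                eapply rst_trans; eauto].
Qed.

Lemma rsteps_mono (C R : trs F V) (a b : term) : sub_trs C R -> rsteps C a b -> rsteps R a b.
Proof.
  intros HCR. induction 1; [|apply rt_refl|eapply rt_trans; eauto].
  apply rt_step. destruct H as (l & r & sg & p & HB & Hs & Ht). exists l, r, sg, p; auto.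
Qed.

End ParallelRewriting.

Section AbstractRewriting.
Variables (A : Type) (P : relation A).

Definition diamond : Prop := forall s t u, P s t -> P s u -> exists v, P t v /\ P u v.

Definition rt_confluent : Prop :=
  forall s t u, clos_refl_trans _ P s t -> clos_refl_trans _ P s u ->
    exists v, clos_refl_trans _ P t v /\ clos_refl_trans _ P u v.

Lemma diamond_strip : diamond -> forall s t u, P s t -> clos_refl_trans _ P s u ->
  exists v, clos_refl_trans _ P t v /\ P u v.
Proof.
  intros Hd s t u H1 H2. apply clos_rt_rt1n in H2. revert t H1.
  induction H2 as [s|s s1 u Hs Hrest IH]; intros t H1.
  - exists t. split; auto. apply rt_refl.
  - destruct (Hd _ _ _ H1 Hs) as (v1 & Hv1 & Hv2).
    destruct (IH v1 Hv2) as (v & Hv & Huv). exists v. split; auto.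
    eapply rt_trans; [apply rt_step; exact Hv1|exact Hv].
Qed.

Lemma diamond_confluent : diamond -> rt_confluent.
Proof.
  intros Hd s t u H1. apply clos_rt_rt1n in H1. revert u.
  induction H1 as [s|s s1 t Hs Hrest IH]; intros u H2.
  - exists u. split; auto. apply rt_refl.
  - destruct (diamond_strip Hd Hs H2) as (v1 & Hv1 & Hv2).
    destruct (IH v1 Hv1) as (v & H3 & H4). exists v. split; auto.
    eapply rt_trans; [apply rt_step; exact Hv2|exact H4].
Qed.

Lemma confluent_conv_joinable : rt_confluent ->
  forall a b, clos_refl_sym_trans _ P a b ->
    exists c, clos_refl_trans _ P a c /\ clos_refl_trans _ P b c.
Proof.
  intros HC. induction 1 as [a b H|a|a b H IH|a b c H1 IH1 H2 IH2].
  - exists b. split; [apply rt_step; auto|apply rt_refl].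
  - exists a. split; apply rt_refl.
  - destruct IH as [c [H1 H2]]. eauto.
  - destruct IH1 as [x [Hx1 Hx2]], IH2 as [y [Hy1 Hy2]].
    destruct (HC _ _ _ Hx2 Hy1) as [z [Hz1 Hz2]].
    exists z. split; eapply rt_trans; eauto.
Qed.

End AbstractRewriting.

Lemma diamond_between_confluent (A : Type) (S Q : relation A) :
  inclusion _ S Q -> inclusion _ Q (clos_refl_trans _ S) -> diamond Q -> rt_confluent S.
Proof.
  intros HSQ HQS Hd s t u H1 H2.
  assert (Hup : forall a b, clos_refl_trans _ S a b -> clos_refl_trans _ Q a b).
  { induction 1; [apply rt_step; auto|apply rt_refl|eapply rt_trans; eauto]. }
  assert (Hdown : forall a b, clos_refl_trans _ Q a b -> clos_refl_trans _ S a b).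
  { induction 1; [auto|apply rt_refl|eapply rt_trans; eauto]. }
  destruct (diamond_confluent Hd (Hup _ _ H1) (Hup _ _ H2)) as (v & H3 & H4).
  exists v. split; apply Hdown; auto.
Qed.

Section Decomposition.
Context {F V : Type}.
Local Notation term := (term F V).
Local Notation subst := (subst F V).

Definition redex_result (e : rule F V * subst) : term := apply_subst (snd e) (snd (fst e)).

(* [decomposes B l s u qs s']: the parallel step [ls ⇉_B u] consists of a
   parallel step [s ⇉_B s'] on the substitution together with the contraction
   of redexes [qs] at distinct, pairwise parallel function positions of [l];
   each entry of [qs] records the position, the rule and its matcher. *)
Definition decomposes (B : trs F V) (l : term) (s : subst) (u : term)
  (qs : list (pos * (rule F V * subst))) (s' : subst) : Prop :=
  (forall p rl th, In (p, (rl, th)) qs -> B rl /\ exists lsub, subterm_at l p = Some lsub /\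
       (exists f ts, lsub = Fun f ts) /\ apply_subst s lsub = apply_subst th (fst rl) /\
       (forall x, In x (vars lsub) -> s' x = s x)) /\
  NoDup (map fst qs) /\ pairwise_parallel (map fst qs) /\
  (forall x, par B (s x) (s' x)) /\
  (forall x, ~ In x (vars l) -> s' x = s x) /\
  u = replace_all redex_result qs (apply_subst s' l).

Lemma decomposes_cons B f l ls s u0 us qs0 s0 qs1 s1 :
  (forall x, In x (vars l) -> ~ In x (flat_map (@vars F V) ls)) ->
  decomposes B l s u0 qs0 s0 ->
  decomposes B (Fun f ls) s (Fun f us) qs1 s1 -> (forall e, In e qs1 -> fst e <> []) ->
  decomposes B (Fun f (l :: ls)) s (Fun f (u0 :: us))
    (map (fun e => (0 :: fst e, snd e)) qs0 ++ map (fun e => (shift_pos (fst e), snd e)) qs1)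
    (fun x => if in_dec var_eq_dec x (vars l) then s0 x else s1 x).
Proof.
  intros Hdisj (D1 & D2 & D3 & D4 & D5 & D6) (E1 & E2 & E3 & E4 & E5 & E6) Ene.
  set (s' := fun x => if in_dec var_eq_dec x (vars l) then s0 x else s1 x).
  assert (Hs'l : forall x, In x (vars l) -> s' x = s0 x).
  { intros x Hx. unfold s'. destruct in_dec; tauto. }
  assert (Hs'r : forall x, ~ In x (vars l) -> s' x = s1 x).
  { intros x Hx. unfold s'. destruct in_dec; tauto. }
  assert (Hpos : NoDup (map (cons 0) (map fst qs0) ++ map shift_pos (map fst qs1)) /\
                 pairwise_parallel (map (cons 0) (map fst qs0) ++ map shift_pos (map fst qs1))).
  { apply positions_cons_shift; auto. intros Hin. apply in_map_iff in Hin as [e [He Hin]].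
    exact (Ene e Hin He). }
  rewrite !map_map in Hpos.
  split; [|rewrite map_app, !map_map; split; [apply Hpos|split; [apply Hpos|split; [|split]]]].
  - intros p rl th Hin. apply in_app_or in Hin as [Hin|Hin];
      apply in_map_iff in Hin as [[q [rl' th']] [Heq Hin]]; simpl in Heq;
      injection Heq as <- -> ->.
    + destruct (D1 _ _ _ Hin) as [HB (lsub & Hsub & Hf & Heq & Hx)]. split; auto.
      exists lsub. simpl. repeat split; auto.
      intros x Hxl. rewrite Hs'l; auto. eapply subterm_vars; eauto.
    + destruct (E1 _ _ _ Hin) as [HB (lsub & Hsub & Hf & Heq & Hx)]. split; auto.
      destruct q as [|i q]. { exfalso; eapply (Ene (nil, (rl, th))); eauto. }
      exists lsub. split; [exact Hsub|]. repeat split; auto.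
      intros x Hxl. assert (Hxr : In x (flat_map (@vars F V) ls)).
      { rewrite <- vars_Fun with (f := f). eapply subterm_vars with (p := i :: q); eauto. }
      rewrite Hs'r; auto. intros Hxl'. eapply Hdisj; eauto.
  - intros x. unfold s'. destruct in_dec; auto.
  - intros x Hx. rewrite vars_Fun in Hx. simpl in Hx.
    rewrite Hs'r by (intro; apply Hx; apply in_or_app; auto).
    apply E5. rewrite vars_Fun. intro; apply Hx; apply in_or_app; auto.
  - rewrite replace_all_app, apply_Fun. cbn [map].
    rewrite replace_all_below. cbn [update_nth].
    replace (replace_all redex_result qs0 (apply_subst s' l)) with u0.
    2: { rewrite D6. f_equal. apply subst_ext. intros; symmetry; auto. }
    replace (map (apply_subst s') ls) with (map (apply_subst s1) ls).
    2: { apply map_ext_in. intros t Ht. apply subst_ext. intros x Hx. symmetry. apply Hs'r.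
         intro Hxl. eapply Hdisj; eauto. apply in_flat_map; eauto. }
    symmetry. apply replace_all_shift; auto.
Qed.

Lemma NoDup_app_disjoint {A} (l1 l2 : list A) a : NoDup (l1 ++ l2) -> In a l1 -> ~ In a l2.
Proof.
  induction l1; simpl; intros H H1; [destruct H1|].
  inversion H; subst. destruct H1 as [<-|H1]; auto.
  intros H2. apply H3. apply in_or_app; auto.
Qed.

Lemma par_decompose_args B f (ls : list term) :
  Forall (fun l => NoDup (vars l) -> forall (s : subst) u, par B (apply_subst s l) u ->
            exists qs s', decomposes B l s u qs s') ls ->
  NoDup (flat_map (@vars F V) ls) ->
  forall (s : subst) us, par_list B (map (apply_subst s) ls) us ->
  exists qs s', decomposes B (Fun f ls) s (Fun f us) qs s' /\ (forall e, In e qs -> fst e <> []).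
Proof.
  intros Hall. induction Hall as [|l ls' Hl Hall IH]; intros Hnd s us Hp.
  - inversion Hp; subst. exists [], s. split; [|intros _ []].
    split; [intros p rl th []|]. split; [constructor|]. split; [intros p q []|].
    split; [intros; apply par_refl|]. split; auto.
  - simpl in Hp. inversion Hp as [|t0 u0 ts0 us' Hp0 Hps]; subst. simpl in Hnd.
    destruct (Hl (NoDup_app_remove_r _ _ Hnd) s u0 Hp0) as (qs0 & s0 & D).
    destruct (IH (NoDup_app_remove_l _ _ Hnd) s us' Hps) as (qs1 & s1 & E & Ene).
    eexists _, _. split.
    + apply decomposes_cons; eauto. intros x. apply NoDup_app_disjoint; auto.
    + intros e Hin. apply in_app_or in Hin as [Hin|Hin];
        apply in_map_iff in Hin as [e' [<- He']]; simpl; [congruence|].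
      specialize (Ene _ He'). destruct (fst e'); simpl; congruence.
Qed.

Lemma par_decompose B (l : term) : NoDup (vars l) ->
  forall (s : subst) u, par B (apply_subst s l) u -> exists qs s', decomposes B l s u qs s'.
Proof.
  induction l as [x|f ls IH] using term_nested_ind; intros Hnd s u Hp.
  - exists [], (fun y => if var_eq_dec y x then u else s y).
    split; [intros p rl th []|]. split; [constructor|]. split; [intros p q []|].
    split; [|split].
    + intros y. destruct (var_eq_dec y x) as [->|]; auto using par_refl.
    + intros y Hy. destruct (var_eq_dec y x) as [->|]; auto. simpl in Hy; tauto.
    + simpl. destruct (var_eq_dec x x); congruence.
  - rewrite apply_Fun in Hp.
    apply par_Fun_inv in Hp as [(us & -> & Hps)|(l0 & r0 & th & HB & Heq & ->)].
    + rewrite vars_Fun in Hnd. destruct (par_decompose_args f IH Hnd s Hps) as (qs & s' & H & _).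
      eauto.
    + exists [([], ((l0, r0), th))], s.
      split; [|split; [|split; [|split; [|split]]]].
      * intros p rl th' [Hin|[]]. injection Hin as <- <- <-. split; auto.
        exists (Fun f ls). simpl. repeat split; eauto.
      * repeat constructor. intros [].
      * intros p q [<-|[]] [<-|[]]; congruence.
      * intros; apply par_refl.
      * auto.
      * unfold replace_all. cbn [fold_left fst snd]. rewrite replace_nil. reflexivity.
Qed.

End Decomposition.

Section Unification.
Context {F V : Type}.
Local Notation term := (term F V).
Local Notation subst := (subst F V).

Fixpoint size (t : term) : nat :=
  match t with
  | Var _ => 1
  | Fun _ ts => S (list_sum (map size ts))
  end.

Lemma size_le_sum (t : term) ts : In t ts -> size t <= list_sum (map size ts).
Proof. induction ts as [|u ts IH]; simpl; [intros []|]. intros [->|H]; [lia|specialize (IH H); lia]. Qed.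

Lemma size_occ (s : subst) x t : In x (vars t) -> size (s x) <= size (apply_subst s t).
Proof.
  induction t as [y|f ts IH] using term_nested_ind; intros Hx.
  - simpl in Hx. destruct Hx as [->|[]]. simpl. lia.
  - rewrite vars_Fun in Hx. apply in_flat_map in Hx as [t [Ht Hx]].
    rewrite apply_Fun. rewrite Forall_forall in IH. simpl.
    pose proof (size_le_sum (apply_subst s t) (map (apply_subst s) ts) (in_map _ _ _ Ht)).
    rewrite map_map in H. specialize (IH t Ht Hx). rewrite map_map. lia.
Qed.

Lemma occurs_no_unifier (s : subst) x t :
  In x (vars t) -> t <> Var x -> s x <> apply_subst s t.
Proof.
  destruct t as [y|f ts]; intros Hx Hne Heq.
  - simpl in Hx. destruct Hx as [->|[]]; congruence.
  - rewrite vars_Fun in Hx. apply in_flat_map in Hx as [t [Ht Hx]].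
    pose proof (size_occ s x t Hx).
    pose proof (size_le_sum (apply_subst s t) (map (apply_subst s) ts) (in_map _ _ _ Ht)).
    rewrite Heq in H. rewrite apply_Fun in H. simpl in H. lia.
Qed.

Definition equations := list (term * term).
Definition solves (E : equations) (s : subst) :=
  forall a b, In (a, b) E -> apply_subst s a = apply_subst s b.
Definition most_general (E : equations) (t : subst) :=
  forall s, solves E s -> exists d : subst, forall x, s x = apply_subst d (t x).
Definition has_mgu (E : equations) :=
  (exists s, solves E s) -> exists t, solves E t /\ most_general E t.

Lemma solves_cons a b E s :
  solves ((a, b) :: E) s <-> apply_subst s a = apply_subst s b /\ solves E s.
Proof.
  unfold solves; simpl; split.
  - intros H; split; [apply H; left; reflexivity|intros a' b' Hi; apply H; right; exact Hi].
  - intros [H1 H2] a' b' [Heq|Hin]; [injection Heq as <- <-|]; auto.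
Qed.

Lemma has_mgu_swap a b E : has_mgu ((b, a) :: E) -> has_mgu ((a, b) :: E).
Proof.
  assert (Hsw : forall s, solves ((a, b) :: E) s <-> solves ((b, a) :: E) s).
  { intros s. rewrite !solves_cons. split; intros [H1 H2]; split; auto. }
  intros H Hex. destruct H as [t [Ht Hg]].
  - destruct Hex as [s Hs]. exists s. apply Hsw; auto.
  - exists t. split; [apply Hsw; auto|]. intros s Hs. apply Hg. apply Hsw; auto.
Qed.

Lemma has_mgu_trivial a E : has_mgu E -> has_mgu ((a, a) :: E).
Proof.
  intros H [s Hs]. apply solves_cons in Hs as [_ Hs].
  destruct H as [t [Ht Hg]]; [eauto|].
  exists t. split; [apply solves_cons; auto|]. intros s' Hs'. apply Hg. apply solves_cons in Hs'. tauto.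
Qed.

Definition subst1 (x : V) (c : term) : subst := fun y => if var_eq_dec y x then c else Var y.

Definition subst_eqs (s : subst) (E : equations) : equations :=
  map (fun e => (apply_subst s (fst e), apply_subst s (snd e))) E.

Lemma subst1_notin x c t : ~ In x (vars t) -> apply_subst (subst1 x c) t = t.
Proof.
  intros H. rewrite <- (subst_id t) at 2. apply subst_ext. intros y Hy.
  unfold subst1. destruct (var_eq_dec y x); congruence.
Qed.

Lemma subst1_absorb (s : subst) x c t : s x = apply_subst s c ->
  apply_subst s (apply_subst (subst1 x c) t) = apply_subst s t.
Proof.
  intros H. rewrite subst_comp. apply subst_ext. intros y _. unfold subst1.
  destruct (var_eq_dec y x) as [->|]; auto.
Qed.

Lemma vars_subst1 x c t y : In y (vars (apply_subst (subst1 x c) t)) ->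
  (In y (vars t) /\ y <> x) \/ In y (vars c).
Proof.
  intros H. apply vars_subst in H as [z [Hz Hy]]. unfold subst1 in Hy.
  destruct (var_eq_dec z x) as [->|]; auto. simpl in Hy. destruct Hy as [->|[]]. left; auto.
Qed.

Lemma has_mgu_elim x c E :
  ~ In x (vars c) -> has_mgu (subst_eqs (subst1 x c) E) -> has_mgu ((Var x, c) :: E).
Proof.
  intros Hx H [s0 Hs0].
  assert (Hsol : forall s, solves ((Var x, c) :: E) s -> solves (subst_eqs (subst1 x c) E) s).
  { intros s Hs a b Hin. apply solves_cons in Hs as [Hsx Hs]. unfold subst_eqs in Hin.
    apply in_map_iff in Hin as [[a0 b0] [Heq Hin]]. injection Heq as <- <-. simpl.
    rewrite !subst1_absorb; auto. }
  destruct H as [t [Ht Hg]]; [eauto|].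
  exists (fun y => apply_subst t (subst1 x c y)). split.
  - apply solves_cons. split.
    + simpl. unfold subst1 at 1. destruct (var_eq_dec x x); [|congruence].
      rewrite <- subst_comp, subst1_notin; auto.
    + intros a b Hin. rewrite <- !subst_comp. apply Ht. unfold subst_eqs.
      apply in_map_iff. exists (a, b). auto.
  - intros s Hs. destruct (Hg s (Hsol s Hs)) as [d Hd].
    apply solves_cons in Hs as [Hs1 _]. simpl in Hs1.
    exists d. intros y. unfold subst1. destruct (var_eq_dec y x) as [->|].
    + rewrite Hs1, subst_comp. apply subst_ext. intros z _. apply Hd.
    + simpl. apply Hd.
Qed.

Lemma has_mgu_var x c E :
  has_mgu E -> (~ In x (vars c) -> has_mgu (subst_eqs (subst1 x c) E)) ->
  has_mgu ((Var x, c) :: E).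
Proof.
  intros HE Helim.
  destruct (classic (c = Var x)) as [->|Hne]; [apply has_mgu_trivial; auto|].
  destruct (classic (In x (vars c))) as [Hocc|Hnocc]; [|apply has_mgu_elim; auto].
  intros [s Hs]. apply solves_cons in Hs as [Hs _].
  exfalso. exact (occurs_no_unifier s Hocc Hne Hs).
Qed.

Lemma solves_combine ts us (s : subst) : length ts = length us ->
  (solves (combine ts us) s <-> map (apply_subst s) ts = map (apply_subst s) us).
Proof.
  revert us; induction ts as [|t ts IH]; intros [|u us] Hl; simpl in *; try discriminate.
  - split; auto. intros _ a b [].
  - injection Hl as Hl. rewrite solves_cons, IH by auto. split.
    + intros [H1 H2]. f_equal; auto.
    + intros H. injection H as H1 H2. auto.
Qed.

Lemma has_mgu_decompose f g ts us E :
  has_mgu (combine ts us ++ E) -> has_mgu ((Fun f ts, Fun g us) :: E).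
Proof.
  intros H [s0 Hs0].
  assert (Hshape : f = g /\ length ts = length us).
  { apply solves_cons in Hs0 as [Hfg _]. simpl in Hfg. injection Hfg as <- Hmap.
    split; auto. rewrite <- (length_map (apply_subst s0) ts), Hmap. apply length_map. }
  destruct Hshape as [<- Hlen].
  assert (Hsol : forall s, solves ((Fun f ts, Fun f us) :: E) s <-> solves (combine ts us ++ E) s).
  { intros s. rewrite solves_cons. simpl. split.
    - intros [Hfg HE] a b Hin. apply in_app_or in Hin as [Hin|Hin]; [|apply HE; auto].
      injection Hfg as Hmap. exact (proj2 (@solves_combine ts us s Hlen) Hmap a b Hin).
    - intros Hs. split.
      + f_equal. apply solves_combine; auto. intros a b Hin. apply Hs, in_or_app; auto.
      + intros a b Hin. apply Hs, in_or_app; auto. }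
  destruct H as [t [Ht Hg]]; [exists s0; apply Hsol; auto|].
  exists t. split; [apply Hsol; auto|]. intros s Hs. apply Hg. apply Hsol; auto.
Qed.

(* Termination measure: the number of distinct variables, then the total size. *)
Definition size_eqs (E : equations) := list_sum (map (fun e => size (fst e) + size (snd e)) E).
Definition eqs_vars (E : equations) := flat_map (fun e => vars (fst e) ++ vars (snd e)) E.
Definition num_vars (E : equations) := length (nodup var_eq_dec (eqs_vars E)).

Lemma num_vars_le E1 E2 : incl (eqs_vars E1) (eqs_vars E2) -> num_vars E1 <= num_vars E2.
Proof.
  intros H. unfold num_vars. apply NoDup_incl_length. apply NoDup_nodup.
  intros x Hx. apply nodup_In. apply nodup_In in Hx. auto.
Qed.

Lemma num_vars_lt E1 E2 x : incl (eqs_vars E1) (eqs_vars E2) ->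
  In x (eqs_vars E2) -> ~ In x (eqs_vars E1) -> num_vars E1 < num_vars E2.
Proof.
  intros H Hx Hn. unfold num_vars.
  apply Nat.le_lt_trans with (length (remove var_eq_dec x (nodup var_eq_dec (eqs_vars E2)))).
  - apply NoDup_incl_length. apply NoDup_nodup.
    intros y Hy. apply nodup_In in Hy. apply in_in_remove.
    + intros ->. auto.
    + apply nodup_In. auto.
  - apply remove_length_lt. apply nodup_In. auto.
Qed.

Lemma eqs_vars_cons a b E : eqs_vars ((a, b) :: E) = vars a ++ vars b ++ eqs_vars E.
Proof. unfold eqs_vars; simpl. rewrite app_assoc. reflexivity. Qed.

Lemma num_vars_tail a b E : num_vars E <= num_vars ((a, b) :: E).
Proof. apply num_vars_le. rewrite eqs_vars_cons. intros y Hy. rewrite !in_app_iff. auto. Qed.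

Lemma num_vars_swap a b E : num_vars ((a, b) :: E) = num_vars ((b, a) :: E).
Proof.
  apply Nat.le_antisymm; apply num_vars_le; rewrite !eqs_vars_cons; intros y Hy;
    rewrite !in_app_iff in *; tauto.
Qed.

Lemma num_vars_elim x c E : ~ In x (vars c) ->
  num_vars (subst_eqs (subst1 x c) E) < num_vars ((Var x, c) :: E).
Proof.
  intros Hx. apply num_vars_lt with x.
  - intros y Hy. unfold subst_eqs, eqs_vars in Hy. apply in_flat_map in Hy as [[a0 b0] [Hin Hy]].
    apply in_map_iff in Hin as [[a1 b1] [Heq Hin]]. injection Heq as <- <-. simpl in Hy.
    rewrite eqs_vars_cons, !in_app_iff.
    apply in_app_or in Hy as [Hy|Hy]; apply vars_subst1 in Hy as [[Hy _]|Hy]; auto;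
      right; right; apply in_flat_map; exists (a1, b1); simpl; rewrite in_app_iff; auto.
  - rewrite eqs_vars_cons. simpl. auto.
  - intros Hy. unfold subst_eqs, eqs_vars in Hy. apply in_flat_map in Hy as [[a0 b0] [Hin Hy]].
    apply in_map_iff in Hin as [[a1 b1] [Heq Hin]]. injection Heq as <- <-. simpl in Hy.
    apply in_app_or in Hy as [Hy|Hy]; apply vars_subst1 in Hy as [[_ Hy]|Hy]; auto.
Qed.

Lemma size_eqs_tail a b E : size_eqs E < size_eqs ((a, b) :: E).
Proof. unfold size_eqs. simpl. destruct a, b; simpl; lia. Qed.

Lemma size_eqs_swap a b E : size_eqs ((a, b) :: E) = size_eqs ((b, a) :: E).
Proof. unfold size_eqs; simpl; lia. Qed.

Lemma size_eqs_decompose f g ts us E :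
  size_eqs (combine ts us ++ E) < size_eqs ((Fun f ts, Fun g us) :: E).
Proof.
  assert (Hc : size_eqs (combine ts us) <= list_sum (map size ts) + list_sum (map size us)).
  { unfold size_eqs. revert us; induction ts as [|t ts IH]; intros [|u us]; simpl; try lia.
    specialize (IH us). lia. }
  unfold size_eqs in *. rewrite map_app, list_sum_app. simpl. lia.
Qed.

Lemma num_vars_decompose f g ts us E :
  num_vars (combine ts us ++ E) <= num_vars ((Fun f ts, Fun g us) :: E).
Proof.
  apply num_vars_le. intros z Hz. rewrite eqs_vars_cons, !vars_Fun, !in_app_iff.
  unfold eqs_vars in Hz. rewrite flat_map_app in Hz. apply in_app_or in Hz as [Hz|Hz]; [|auto].
  revert us Hz; induction ts as [|t ts IH]; intros [|u us] Hz; simpl in *; try tauto.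
  rewrite !in_app_iff in *. destruct Hz as [[Hz|Hz]|Hz]; auto.
  apply IH in Hz. tauto.
Qed.

Lemma unify_exists (E : equations) : has_mgu E.
Proof.
  enough (H : forall n m E', num_vars E' < n -> size_eqs E' < m -> has_mgu E') by eauto.
  clear E. induction n as [|n IHn]; intros m; [lia|].
  induction m as [|m IHm]; intros E0 Hn Hm; [lia|].
  assert (Hvar : forall x c E, num_vars ((Var x, c) :: E) < S n ->
                   size_eqs ((Var x, c) :: E) < S m -> has_mgu ((Var x, c) :: E)).
  { intros x c E Hn' Hm'. apply has_mgu_var.
    - apply IHm; [pose proof (num_vars_tail (Var x) c E)|pose proof (size_eqs_tail (Var x) c E)]; lia.
    - intros Hx. apply (IHn (S (size_eqs (subst_eqs (subst1 x c) E)))); [|lia].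
      pose proof (@num_vars_elim x c E Hx). lia. }
  destruct E0 as [|[[x|f ts] [y|g us]] E].
  - intros _. exists (@Var F V). split; [intros a b []|]. intros s _. exists s. reflexivity.
  - apply Hvar; auto.
  - apply Hvar; auto.
  - apply has_mgu_swap, Hvar; [rewrite <- num_vars_swap|rewrite <- size_eqs_swap]; auto.
  - apply has_mgu_decompose, IHm.
    + pose proof (num_vars_decompose f g ts us E). lia.
    + pose proof (size_eqs_decompose f g ts us E). lia.
Qed.

End Unification.

Section RenamingApart.
Context {F V : Type}.
Local Notation term := (term F V).
Local Notation subst := (subst F V).
Variables (g : nat -> V) (g_inj : forall m n, g m = g n -> m = n).

Lemma fresh_index : forall (A : list V) k, exists n, k <= n /\ ~ In (g n) A.
Proof.
  induction A as [|a A IH]; intros k.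
  - exists k; split; auto.
  - destruct (IH k) as [n1 [H1 H2]].
    destruct (var_eq_dec (g n1) a) as [He|Hne].
    + destruct (IH (S n1)) as [n2 [H3 H4]]. exists n2. split; [lia|].
      intros [Ha|Ha]; auto. rewrite <- He in Ha. apply g_inj in Ha. lia.
    + exists n1. split; auto. intros [Ha|Ha]; auto.
Qed.

Definition swap (a b x : V) : V :=
  if var_eq_dec x a then b else if var_eq_dec x b then a else x.

Lemma swap_invol a b x : swap a b (swap a b x) = x.
Proof. unfold swap. repeat (destruct var_eq_dec; subst; auto; try congruence). Qed.

Lemma renaming_comp (p1 p2 : V -> V) :
  renaming p1 -> renaming p2 -> renaming (fun x => p2 (p1 x)).
Proof.
  intros [i1 [H1 H1']] [i2 [H2 H2']]. exists (fun x => i1 (i2 x)). split; intros x.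
  - rewrite H2. auto.
  - rewrite H1'. auto.
Qed.

Lemma rename_avoid (L avoid : list V) :
  exists pi, renaming pi /\ forall x, In x L -> ~ In (pi x) avoid.
Proof.
  induction L as [|x L IH].
  - exists (fun x => x). split; [exists (fun x => x); auto|]. intros _ [].
  - destruct IH as [pi [Hpi Hav]].
    destruct (classic (In (pi x) avoid)) as [Hin|Hnin]; [|exists pi; split; auto; intros z [<-|Hz]; auto].
    destruct (fresh_index (avoid ++ map pi L ++ [pi x]) 0) as [n [_ Hn]].
    set (y := g n) in *. rewrite !in_app_iff in Hn. simpl in Hn.
    exists (fun z => swap (pi x) y (pi z)). split.
    + apply renaming_comp; auto. exists (swap (pi x) y). split; intros; apply swap_invol.
    + intros z Hz. unfold swap.
      destruct (var_eq_dec (pi z) (pi x)) as [_|Hzx]; [tauto|].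
      destruct (var_eq_dec (pi z) y) as [He|].
      * exfalso. apply Hn. right; left. rewrite <- He. apply in_map.
        destruct Hz as [<-|Hz]; [congruence|auto].
      * destruct Hz as [<-|Hz]; [congruence|auto].
Qed.

Definition rename_rule (pi : V -> V) (rl : rule F V) : rule F V :=
  (apply_subst (fun x => Var (pi x)) (fst rl), apply_subst (fun x => Var (pi x)) (snd rl)).

Lemma rename_rule_apart (rl : rule F V) (th : subst) (avoid : list V) :
  exists rl' (th' : subst), variant rl rl' /\
    (forall x, In x (rule_vars rl') -> ~ In x avoid) /\
    apply_subst th' (fst rl') = apply_subst th (fst rl) /\
    apply_subst th' (snd rl') = apply_subst th (snd rl).
Proof.
  destruct (rename_avoid (rule_vars rl) avoid) as (pi & Hpi & Hav).
  destruct Hpi as [pinv [Hp1 Hp2]].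
  assert (Hren : forall t, apply_subst (fun x => th (pinv x))
                            (apply_subst (fun x => Var (pi x)) t) = apply_subst th t).
  { intros t. rewrite subst_comp. apply subst_ext. intros y _. simpl. rewrite Hp1. auto. }
  exists (rename_rule pi rl), (fun x => th (pinv x)). split; [|split; [|split]].
  - exists pi. split; [exists pinv; auto|auto].
  - intros x Hx. unfold rule_vars, rename_rule in Hx. simpl in Hx.
    rewrite !vars_rename, <- map_app in Hx. apply in_map_iff in Hx as [z [<- Hz]]. auto.
  - apply Hren.
  - apply Hren.
Qed.

Definition pairwise_var_disjoint (ps : list (pos * rule F V)) :=
  forall p q a b, In (p, a) ps -> In (q, b) ps -> p <> q -> var_disjoint a b.

(* [ps] lists renamed variants of the redex rules in [e], whose instances
   under [rho] are the redexes and contracta recorded in [e]. *)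
Definition renamed_redex (R : trs F V) (rho : subst)
  (e : pos * (rule F V * subst)) (pr : pos * rule F V) : Prop :=
  fst e = fst pr /\ variant_of R (snd pr) /\
  apply_subst rho (fst (snd pr)) = apply_subst (snd (snd e)) (fst (fst (snd e))) /\
  apply_subst rho (snd (snd pr)) = apply_subst (snd (snd e)) (snd (fst (snd e))).

Lemma Forall2_impl_in {A B} (P Q : A -> B -> Prop) l1 l2 :
  Forall2 P l1 l2 -> (forall a b, In b l2 -> P a b -> Q a b) -> Forall2 Q l1 l2.
Proof. induction 1; intros H'; constructor; simpl in *; auto. Qed.

Lemma Forall2_in_r {A B} (P : A -> B -> Prop) l1 l2 b :
  Forall2 P l1 l2 -> In b l2 -> exists a, In a l1 /\ P a b.
Proof.
  induction 1; simpl; [intros []|]. intros [<-|Hin]; [eauto|].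
  destruct (IHForall2 Hin) as [a [H1 H2]]; eauto.
Qed.

Lemma rename_apart (R : trs F V) (qs : list (pos * (rule F V * subst))) (avoid : list V)
  (base : subst) :
  (forall p rl th, In (p, (rl, th)) qs -> R rl) ->
  exists (ps : list (pos * rule F V)) (rho : subst),
    Forall2 (renamed_redex R rho) qs ps /\
    (forall p rl, In (p, rl) ps -> forall x, In x (rule_vars rl) -> ~ In x avoid) /\
    pairwise_var_disjoint ps /\
    (forall x, In x avoid -> rho x = base x).
Proof.
  induction qs as [|[p [rl th]] qs IH]; intros HR.
  - exists [], base. split; [constructor|]. split; [intros _ _ []|].
    split; [intros ? ? ? ? []|]. auto.
  - destruct IH as (ps & rho' & H1 & H2 & H3 & H4). { intros; eapply HR; simpl; eauto. }
    set (AV := avoid ++ flat_map (fun pr => rule_vars (snd pr)) ps).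
    destruct (rename_rule_apart rl th AV) as (rl' & th' & Hvar & Hrl' & Hl & Hr).
    set (rho := fun x => if in_dec var_eq_dec x (rule_vars rl') then th' x else rho' x).
    assert (Hnew : forall t, incl (vars t) (rule_vars rl') -> apply_subst rho t = apply_subst th' t).
    { intros t Ht. apply subst_ext. intros y Hy. unfold rho. destruct in_dec as [|Hn]; auto.
      exfalso. apply Hn, Ht, Hy. }
    assert (Hold : forall pr, In pr ps ->
                     forall t, incl (vars t) (rule_vars (snd pr)) -> apply_subst rho t = apply_subst rho' t).
    { intros pr Hpr t Ht. apply subst_ext. intros y Hy. unfold rho. destruct in_dec as [Hi|]; auto.
      exfalso. apply (Hrl' y Hi). unfold AV. apply in_or_app; right. apply in_flat_map. eauto. }
    assert (HAV : forall x, In x (rule_vars rl') -> forall q b, In (q, b) ps -> ~ In x (rule_vars b)).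
    { intros x Hx q b Hqb Hb. apply (Hrl' x Hx). unfold AV. apply in_or_app; right.
      apply in_flat_map. exists (q, b). auto. }
    exists ((p, rl') :: ps), rho. split; [|split; [|split]].
    + constructor.
      * unfold renamed_redex; simpl. split; auto. split; [exists rl; split; [eapply HR; simpl; eauto|auto]|].
        split; [rewrite <- Hl|rewrite <- Hr]; apply Hnew; unfold rule_vars; intros y Hy; apply in_or_app; auto.
      * eapply Forall2_impl_in; eauto. intros e pr Hin [E1 [E2 [E3 E4]]]. split; auto. split; auto.
        rewrite !(Hold pr Hin); auto; unfold rule_vars; intros y Hy; apply in_or_app; auto.
    + intros p0 rl0 [Heq|Hin] x Hx.
      * injection Heq as <- <-. intro; apply (Hrl' x Hx). unfold AV; apply in_or_app; auto.
      * eapply H2; eauto.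
    + intros p1 q1 a b [Ha|Ha] [Hb|Hb] Hpq.
      * injection Ha as <- <-. injection Hb as <- <-. congruence.
      * injection Ha as <- <-. intros x Hx. eapply HAV; eauto.
      * injection Hb as <- <-. intros x Hx Hx'. eapply HAV; eauto.
      * eapply H3; eauto.
    + intros x Hx. unfold rho. destruct in_dec as [Hi|]; auto.
      exfalso. apply (Hrl' x Hi). unfold AV; apply in_or_app; auto.
Qed.

End RenamingApart.

Section Main.
Context {F V : Type}.
Local Notation term := (term F V).
Local Notation subst := (subst F V).
Variables (g : nat -> V) (g_inj : forall m n, g m = g n -> m = n).
Variables (R C : trs F V).
Hypotheses (R_trs : is_trs R) (R_left_linear : left_linear R) (C_sub_R : sub_trs C R)
           (C_confluent : confluent C) (pcp_conv : forall t u, pcp R R t u -> conv C t u).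

Definition subterm_or (l : term) (p : pos) : term :=
  match subterm_at l p with Some t => t | None => l end.

Lemma unifies_iff_solves (l : term) (ps : list (pos * rule F V)) :
  (forall p rl, In (p, rl) ps -> subterm_at l p <> None) ->
  forall tau, unifies l ps tau <->
              solves (map (fun pr => (fst (snd pr), subterm_or l (fst pr))) ps) tau.
Proof.
  intros Hv tau. unfold unifies, solves. split.
  - intros H a b Hin. apply in_map_iff in Hin as [[p rl] [Heq Hin]]. injection Heq as <- <-.
    destruct (H p rl Hin) as [lsub [H1 H2]]. unfold subterm_or. simpl. rewrite H1. auto.
  - intros H p rl Hin. specialize (Hv p rl Hin). unfold subterm_or in H.
    destruct (subterm_at l p) as [lsub|] eqn:E; [|congruence].
    exists lsub. split; auto. apply (H (fst rl) lsub). apply in_map_iff.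
    exists (p, rl). simpl. rewrite E. auto.
Qed.

Lemma root_variant_overlap l r rl (rho : subst) :
  variant_of R rl -> variant rl (l, r) -> unifies l [([], rl)] rho ->
  apply_subst rho (snd rl) = apply_subst rho r.
Proof.
  intros [[l0 r0] [HR0 [pi0 [_ [E1 E2]]]]] [pi [_ [Hl Hr]]] Hun. simpl in Hl, Hr.
  destruct (Hun [] rl) as [lsub [Hsub Heq]]; [simpl; auto|]. simpl in Hsub. injection Hsub as <-.
  rewrite Hl, subst_comp in Heq.
  rewrite Hr, subst_comp. symmetry. apply subst_ext. intros x Hx. symmetry.
  apply (subst_ext_inv _ _ _ Heq). simpl in *.
  rewrite E1, vars_rename. rewrite E2, vars_rename in Hx.
  apply in_map_iff in Hx as [z [<- Hz]]. apply in_map. apply (proj2 (R_trs HR0)); auto.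
Qed.

(* Every unifier instance of a parallel overlap of R-rules on a rule of R is
   C-convertible: it is an instance of a parallel critical pair unless it is a
   root overlap of a rule with a variant of itself. *)
Lemma overlap_instance_conv (l r : term) (ps : list (pos * rule F V)) (rho : subst) :
  R (l, r) -> ps <> [] ->
  NoDup (map fst ps) -> pairwise_parallel (map fst ps) ->
  (forall p, In p (map fst ps) -> fun_pos l p) ->
  (forall p rl, In (p, rl) ps -> variant_of R rl) ->
  (forall p rl, In (p, rl) ps -> var_disjoint rl (l, r)) ->
  pairwise_var_disjoint ps ->
  unifies l ps rho ->
  conv C (replace_all (fun rl => apply_subst rho (snd rl)) ps (apply_subst rho l))
         (apply_subst rho r).
Proof.
  intros Hlr Hne Hnd Hpw Hfun Hvar Hdisj Hpwd Hun.
  assert (Hvalid : forall p rl, In (p, rl) ps -> subterm_at l p <> None).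
  { intros p rl Hin. destruct (Hfun p) as (f & ts & E); [apply in_map_iff; exists (p, rl); auto|].
    congruence. }
  destruct (unify_exists (E := map (fun pr => (fst (snd pr), subterm_or l (fst pr))) ps))
    as [tau [Htau Hmg]]; [exists rho; apply unifies_iff_solves; auto|].
  destruct (Hmg rho) as [d Hd]; [apply unifies_iff_solves; auto|].
  assert (Hcomp : forall t, apply_subst d (apply_subst tau t) = apply_subst rho t).
  { intros t. rewrite subst_comp. apply subst_ext. intros x _. symmetry. apply Hd. }
  destruct (classic (exists rl, ps = [([], rl)] /\ variant rl (l, r))) as [(rl & -> & Hv)|Hnroot].
  - unfold replace_all. cbn [fold_left fst snd]. rewrite replace_nil.
    rewrite (root_variant_overlap (Hvar [] rl (or_introl eq_refl)) Hv Hun). apply rst_refl.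
  - assert (Hpc : pcp R R (multi_replace tau (apply_subst tau l) ps) (apply_subst tau r)).
    { exists l, r, ps, tau.
      refine (conj _ (conj Hne (conj Hnd (conj Hfun (conj Hpw (conj Hvar (conj Hdisj
               (conj Hpwd (conj (conj _ _) (conj _ (conj eq_refl eq_refl)))))))))));
        [|apply unifies_iff_solves; auto|intros tau' Ht'; apply Hmg, unifies_iff_solves; auto|
          intros rl Hps Hv; apply Hnroot; eauto].
      exists (l, r). split; auto. exists (fun x => x). split; [exists (fun x => x); auto|].
      simpl. split; symmetry; apply subst_id. }
    apply pcp_conv, (conv_subst d) in Hpc.
    rewrite multi_replace_replace_all, replace_all_subst, !Hcomp in Hpc; auto.
    + erewrite replace_all_ext; [exact Hpc|]. intros a. symmetry. apply Hcomp.
    + intros p a Hin. destruct (subterm_at l p) as [t0|] eqn:E.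
      * rewrite (subterm_subst tau l p E). congruence.
      * exfalso. eapply Hvalid; eauto.
Qed.

Lemma decomposed_peak_conv B l r s u qs s' :
  sub_trs B R -> R (l, r) -> decomposes B l s u qs s' -> qs <> [] ->
  conv C u (apply_subst s' r).
Proof.
  intros HBR Hlr (D1 & D2 & D3 & D4 & D5 & D6) Hne.
  destruct (rename_apart g g_inj R qs (rule_vars (l, r)) s')
    as (ps & rho & HF2 & Hav & Hpwd & Hbase); [intros p rl th Hin; apply HBR; eapply D1; eauto|].
  assert (Hrho : forall t, incl (vars t) (rule_vars (l, r)) -> apply_subst rho t = apply_subst s' t).
  { intros t Ht. apply subst_ext. intros x Hx. apply Hbase. auto. }
  assert (Hrl : apply_subst rho l = apply_subst s' l)
    by (apply Hrho; unfold rule_vars; intros y Hy; apply in_or_app; auto).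
  assert (Hrr : apply_subst rho r = apply_subst s' r)
    by (apply Hrho; unfold rule_vars; intros y Hy; apply in_or_app; auto).
  assert (Hfst : map fst qs = map fst ps).
  { clear -HF2. induction HF2 as [|e pr qs ps [He _]]; simpl; f_equal; auto. }
  assert (Hinfo : forall p rl, In (p, rl) ps -> exists rl0 th lsub, In (p, (rl0, th)) qs /\
            variant_of R rl /\ subterm_at l p = Some lsub /\ (exists f ts, lsub = Fun f ts) /\
            apply_subst rho (fst rl) = apply_subst rho lsub).
  { intros p rl Hin. destruct (Forall2_in_r _ HF2 Hin) as [[p' [rl0 th]] [Hin' [E1 [E2 [E3 _]]]]].
    simpl in *. subst p'. destruct (D1 _ _ _ Hin') as [_ (lsub & Hsub & Hf & Heq & Hx)].
    exists rl0, th, lsub. repeat split; auto. rewrite E3, <- Heq, Hrho.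
    - apply subst_ext. intros x Hxl. symmetry; auto.
    - intros y Hy. apply in_or_app. left. eapply subterm_vars; eauto. }
  rewrite <- Hrr, D6, <- Hrl.
  erewrite replace_all_Forall2 with (l2 := ps).
  - apply overlap_instance_conv.
    + exact Hlr.
    + intros ->. inversion HF2. congruence.
    + rewrite <- Hfst. exact D2.
    + rewrite <- Hfst. exact D3.
    + intros p Hp. apply in_map_iff in Hp as [[p0 rl] [<- Hin]].
      destruct (Hinfo p0 rl Hin) as (_ & _ & lsub & _ & _ & Hsub & [f [ts ->]] & _). exists f, ts. auto.
    + intros p rl Hin. destruct (Hinfo p rl Hin) as (_ & _ & _ & _ & ? & _). auto.
    + exact Hav.
    + exact Hpwd.
    + intros p rl Hin. destruct (Hinfo p rl Hin) as (_ & _ & lsub & _ & _ & ? & _ & ?). eauto.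
  - eapply Forall2_impl_in; eauto. intros [p0 [rl0 th]] [p1 rl1] _ (E1 & _ & _ & E4).
    simpl in *. auto.
Qed.

Lemma overlap_joinable (A B : trs F V) : sub_trs A R -> sub_trs B R ->
  forall l r (s : subst) u, A (l, r) -> par B (apply_subst s l) u ->
  exists t' u', par B (apply_subst s r) t' /\ par A u u' /\ conv C t' u'.
Proof.
  intros HAR HBR l r s u HA Hp.
  assert (Hlr : R (l, r)) by auto.
  destruct (@par_decompose F V B l (R_left_linear Hlr) s u Hp) as (qs & s' & Hdec).
  destruct qs as [|e qs].
  - destruct Hdec as (_ & _ & _ & D4 & _ & D6). unfold replace_all in D6. simpl in D6. subst u.
    exists (apply_subst s' r), (apply_subst s' r).
    split; [apply par_subst; auto|split; [apply par_root; auto|apply rst_refl]].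
  - exists (apply_subst s' r), u. split; [apply par_subst, Hdec|split; [apply par_refl|]].
    apply rst_sym. eapply decomposed_peak_conv; eauto. discriminate.
Qed.

Lemma par_peak_joinable (A B : trs F V) : sub_trs A R -> sub_trs B R ->
  forall s t, par A s t -> forall u, par B s u ->
  exists t' u', par B t t' /\ par A u u' /\ conv C t' u'.
Proof.
  intros HAR HBR.
  apply (@par_mut F V A
    (fun s t _ => forall u, par B s u -> exists t' u', par B t t' /\ par A u u' /\ conv C t' u')
    (fun ts ts' _ => forall us, par_list B ts us -> exists ts'' us'',
       par_list B ts' ts'' /\ par_list A us us'' /\ Forall2 (conv C) ts'' us'')).
  - intros x u Hu. exists u, u. split; auto. split; [apply par_refl|apply rst_refl].
  - intros f ts ts' Hps IH u Hu.
    apply par_Fun_inv in Hu as [(us & -> & Hus)|(l0 & r0 & th & HB0 & Heq & ->)].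
    + destruct (IH us Hus) as (ts'' & us'' & H1 & H2 & H3).
      exists (Fun f ts''), (Fun f us''). split; [constructor; auto|split; [constructor; auto|]].
      apply conv_args; auto.
    + assert (HpA : par A (apply_subst th l0) (Fun f ts')) by (rewrite <- Heq; constructor; auto).
      destruct (overlap_joinable HBR HAR l0 r0 th HB0 HpA) as (t'' & u'' & H1 & H2 & H3).
      exists u'', t''. split; auto. split; auto. apply rst_sym; auto.
  - intros l r sg HA u Hu. exact (overlap_joinable HAR HBR l r sg HA Hu).
  - intros us Hus. inversion Hus; subst. exists [], []. repeat constructor.
  - intros t u ts us Hp IHp Hps IHps us0 Hus0.
    inversion Hus0 as [|t1 u1 ts1 us1 Hp1 Hps1]; subst.
    destruct (IHp u1 Hp1) as (t' & u' & H1 & H2 & H3).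
    destruct (IHps us1 Hps1) as (ts' & us' & H4 & H5 & H6).
    exists (t' :: ts'), (u' :: us'). split; [|split]; constructor; auto.
Qed.

Lemma R_sub_R : sub_trs R R.
Proof. intros rl H; auto. Qed.

Lemma C_strip s t : rsteps C s t -> forall u, par R s u -> exists w, par R t w /\ conv C w u.
Proof.
  intros H. apply clos_rt_rt1n in H. induction H as [s|s s1 t Hst Hrest IH]; intros u Hu.
  - exists u. split; auto. apply rst_refl.
  - destruct (par_peak_joinable C_sub_R R_sub_R (rstep_par Hst) Hu) as (t'' & u'' & H1 & H2 & H3).
    destruct (IH t'' H1) as (w & Hw1 & Hw2). exists w. split; auto.
    eapply rst_trans; [exact Hw2|]. eapply rst_trans; [exact H3|].
    apply rst_sym. apply clos_rt_clos_rst, par_rsteps; auto.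
Qed.

Definition par_then_C (a c : term) : Prop := exists b, par R a b /\ rsteps C b c.

(* γ has the diamond property: close the parallel peak, strip the C-sequences
   off, and join the resulting C-convertible terms by confluence of C. *)
Lemma par_then_C_diamond : diamond par_then_C.
Proof.
  intros s t u (s1 & Hs1 & Ht) (s2 & Hs2 & Hu).
  destruct (par_peak_joinable R_sub_R R_sub_R Hs1 Hs2) as (a & b & Ha & Hb & Hab).
  destruct (C_strip Ht Ha) as (a' & Ha'1 & Ha'2).
  destruct (C_strip Hu Hb) as (b' & Hb'1 & Hb'2).
  destruct (@confluent_conv_joinable _ (rstep C) C_confluent a' b') as (c & Hc1 & Hc2).
  { eapply rst_trans; [exact Ha'2|]. eapply rst_trans; [exact Hab|]. apply rst_sym; auto. }
  exists c. split; [exists a'|exists b']; auto.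
Qed.

(* Confluence of R, since [→_R ⊆ γ ⊆ →*_R]. *)
Lemma R_confluent : confluent R.
Proof.
  apply (diamond_between_confluent (S := rstep R) (Q := par_then_C)).
  - intros a b H. exists b. split; [apply rstep_par; auto|apply rt_refl].
  - intros a b (c & H1 & H2). eapply rt_trans; [apply par_rsteps; eauto|eapply rsteps_mono; eauto].
  - exact par_then_C_diamond.
Qed.

End Main.

Unset Implicit Arguments.

Theorem theorem8 (F V : Type)
  (V_infinite : exists g : nat -> V, forall m n, g m = g n -> m = n)
  (R : trs F V) :
  is_trs R -> left_linear R ->
  (exists C : trs F V,
      sub_trs C R /\ confluent C /\
      (forall t u, pcp R R t u -> conv C t u)) ->
  confluent R.
Proof.
  intros R_trs R_left_linear [C [C_sub_R [C_confluent pcp_conv]]].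
  destruct V_infinite as [g g_inj].
  exact (R_confluent g g_inj R_trs R_left_linear C_sub_R C_confluent pcp_conv).
Qed.
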